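(* Suppose that the Colour alignment problem always has a solution (for all positive integers $m,n$ and every initial distribution of balls). Then every finite $0$-rectangular band that has a permutation matching has an involution matching.
   Context: Colour alignment problem: there are $m$ girls and $mn$ (distinct) balls, each girl holding $n$ balls, and there are exactly $m$ balls of each of $n$ colours. An exchange consists of two girls swapping one ball each (one ball for one ball, so each girl still holds $n$ balls); no ball may participate in more than one exchange. A solution is a set of such exchanges after which each girl holds balls of all $n$ colours (hence exactly one ball of each colour). A finite $0$-rectangular band with $m$ rows and $n$ columns: $S=(R\times C)\cup\{0\}$ with $R=\{1,\dots,m\}$, $C=\{1,\dots,n\}$, and a set $E\subseteq R\times C$ meeting every row and every column; multiplication is $(i,j)(k,l)=(i,l)$ if $(k,j)\in E$ and $0$ otherwise, with $0$ a zero element. For $x\in S$, $V(x)=\{y\in S: xyx=x,\ yxy=y\}$. A permutation matching of $S$ is a bijection $\phi:S\to S$ with $\phi(x)\in V(x)$ for all $x$; an involution matching is a permutation matching $\phi$ with $\phi\circ\phi=\mathrm{id}_S$. *)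

From mathcomp Require Import all_boot.
Set Implicit Arguments. Unset Strict Implicit. Unset Printing Implicit Defensive.

(* ---------- Colour alignment problem ----------
   Girls are 'I_m; the mn distinct balls are 'I_m * 'I_n, ball (i,j) being the
   j-th ball initially held by girl i (so each girl holds n balls).
   An initial distribution is a colouring col : ball -> 'I_n with exactly m
   balls of each colour.  A set of exchanges (each ball in at most one
   exchange, each exchange between two different girls swapping one ball each)
   is encoded by the involution sigma sending a ball to the ball it is swapped
   with (sigma b = b if b takes part in no exchange).  After the exchanges,
   ball b is held by the girl (sigma b).1. *)

Definition exchange_set m n (sigma : 'I_m * 'I_n -> 'I_m * 'I_n) : Prop :=
  (forall b, sigma (sigma b) = b) /\
  (forall b, sigma b <> b -> (sigma b).1 <> b.1).

Definition is_solution m n (col : 'I_m * 'I_n -> 'I_n)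
    (sigma : 'I_m * 'I_n -> 'I_m * 'I_n) : Prop :=
  exchange_set sigma /\
  (forall (i : 'I_m) (c : 'I_n), exists b, (sigma b).1 = i /\ col b = c).

Definition colour_alignment_always_solvable : Prop :=
  forall m n : nat, 0 < m -> 0 < n ->
  forall col : 'I_m * 'I_n -> 'I_n,
    (forall c : 'I_n, #|[set b | col b == c]| = m) ->
    exists sigma, is_solution col sigma.

(* ---------- Finite 0-rectangular bands ----------
   S = (R x C) u {0} is represented by option ('I_m * 'I_n), None being 0. *)

Definition zero_rect_band_set m n (E : {set 'I_m * 'I_n}) : Prop :=
  (forall i : 'I_m, exists j : 'I_n, (i, j) \in E) /\
  (forall j : 'I_n, exists i : 'I_m, (i, j) \in E).

Definition rb_mul m n (E : {set 'I_m * 'I_n})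
    (x y : option ('I_m * 'I_n)) : option ('I_m * 'I_n) :=
  match x, y with
  | Some (i, j), Some (k, l) => if (k, j) \in E then Some (i, l) else None
  | _, _ => None
  end.

Definition in_V (S : Type) (mul : S -> S -> S) (x y : S) : Prop :=
  mul (mul x y) x = x /\ mul (mul y x) y = y.

Definition permutation_matching (S : Type) (mul : S -> S -> S) (phi : S -> S) : Prop :=
  bijective phi /\ forall x, in_V mul x (phi x).

Definition involution_matching (S : Type) (mul : S -> S -> S) (phi : S -> S) : Prop :=
  permutation_matching mul phi /\ forall x, phi (phi x) = x.

From mathcomp Require Import all_boot.

(* A permutation matching of the band restricts to a bijection pi of R x C
   with pi(i,j) = (k,l) only if (k,j) and (i,l) lie in E.  Colour the ball
   (i,j) of girl i by the column of pi(i,j): each colour occurs m times and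
   girl i only holds colours c with (i,c) in E.  A solution sigma of this
   colour alignment instance makes the map h : ball |-> (final owner, colour)
   a bijection of R x C, and the conjugate h o sigma o h^-1 of the involution
   sigma is an involution of R x C that still matches every element with one
   of its inverses; setting 0 |-> 0 extends it to an involution matching. *)

Set Implicit Arguments.
Unset Strict Implicit.
Unset Printing Implicit Defensive.

Lemma fin_onto_bij (T : finType) (h : T -> T) :
  (forall x, exists y, h y = x) -> bijective h.
Proof.
move=> onto.
have onto_eq x : exists y, h y == x by have [y <-] := onto x; exists y.
have [f hK] : exists f, cancel f h.
  by exists (fun x => xchoose (onto_eq x)) => x; apply/eqP/(xchooseP (onto_eq x)).
have [g _ gK] := injF_bij (can_inj hK).
by exists f => // y; rewrite -{1}(gK y) hK gK.
Qed.

Section RectangularBand.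

Variables (m n : nat) (E : {set 'I_m * 'I_n}).

Definition rb_inverse (x y : 'I_m * 'I_n) : bool :=
  ((y.1, x.2) \in E) && ((x.1, y.2) \in E).

Lemma rb_in_V_Some (x y : 'I_m * 'I_n) :
  in_V (rb_mul E) (Some x) (Some y) <-> rb_inverse x y.
Proof.
case: x y => [i j] [k l]; rewrite /in_V /rb_inverse /=.
by case: ifP => kj; case: ifP => il //=; rewrite ?kj ?il; split=> // -[].
Qed.

Lemma rb_in_V_None (x : 'I_m * 'I_n) : ~ in_V (rb_mul E) (Some x) None.
Proof. by case: x => i j []. Qed.

Lemma omap_involution_matching (psi : 'I_m * 'I_n -> 'I_m * 'I_n) :
  involutive psi -> (forall x, rb_inverse x (psi x)) ->
  involution_matching (rb_mul E) (omap psi).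
Proof.
move=> psiK psi_inv.
have omapK : involutive (omap psi) by case=> //= x; rewrite psiK.
split; last exact: omapK.
split; first exact: inv_bij omapK.
by case=> [x|]; [apply/rb_in_V_Some | split].
Qed.

Lemma card_snd_preim (pi : 'I_m * 'I_n -> 'I_m * 'I_n) (c : 'I_n) :
  injective pi -> #|[set b | (pi b).2 == c]| = m.
Proof.
move=> pi_inj.
have -> : [set b | (pi b).2 == c] = pi @^-1: setX setT [set c].
  by apply/setP=> b; rewrite !inE.
by rewrite card_preimset // cardsX cardsT card_ord cards1 muln1.
Qed.

Lemma permutation_matching_colouring (phi : option ('I_m * 'I_n) -> option ('I_m * 'I_n)) :
  permutation_matching (rb_mul E) phi ->
  exists col : 'I_m * 'I_n -> 'I_n,
    (forall c, #|[set b | col b == c]| = m) /\ (forall b, (b.1, col b) \in E).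
Proof.
move=> [phi_bij phi_V].
pose pi x := odflt x (phi (Some x)).
have piE x : phi (Some x) = Some (pi x).
  rewrite /pi; case E_x: (phi (Some x)) => //.
  by have := phi_V (Some x); rewrite E_x => /rb_in_V_None.
have pi_inj : injective pi.
  by move=> x y e; apply: Some_inj; apply: (bij_inj phi_bij); rewrite !piE e.
exists (fun b => (pi b).2); split=> [c|b]; first exact: card_snd_preim.
by have := phi_V (Some b); rewrite piE => /rb_in_V_Some/andP[].
Qed.

Section SolutionInvolution.

Variables (col : 'I_m * 'I_n -> 'I_n) (sigma : 'I_m * 'I_n -> 'I_m * 'I_n).
Hypothesis col_E : forall b, (b.1, col b) \in E.
Hypothesis sol : is_solution col sigma.

Definition owner_colour (b : 'I_m * 'I_n) : 'I_m * 'I_n := ((sigma b).1, col b).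

Lemma owner_colour_bij : bijective owner_colour.
Proof.
have [_ onto] := sol.
by apply: fin_onto_bij => -[i c]; have [b [<- <-]] := onto i c; exists b.
Qed.

Lemma solution_band_involution :
  exists psi, involutive psi /\ forall x, rb_inverse x (psi x).
Proof.
have [[sigmaK _] _] := sol.
have [g ocK gK] := owner_colour_bij.
exists (owner_colour \o sigma \o g); split=> [x | x] /=.
  by rewrite ocK sigmaK gK.
by rewrite -(gK x) ocK /rb_inverse /owner_colour /= sigmaK !col_E.
Qed.

End SolutionInvolution.

End RectangularBand.

Theorem theorem2p4 :
  colour_alignment_always_solvable ->
  forall (m n : nat) (E : {set 'I_m * 'I_n}),
    0 < m -> 0 < n -> zero_rect_band_set E ->
    (exists phi, permutation_matching (rb_mul E) phi) ->
    exists phi, involution_matching (rb_mul E) phi.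
Proof.
move=> solvable m n E m_gt0 n_gt0 _ [phi phi_match].
have [col [col_card col_E]] := permutation_matching_colouring phi_match.
have [sigma sol] := solvable m n m_gt0 n_gt0 col col_card.
have [psi [psiK psi_inv]] := solution_band_involution col_E sol.
by exists (omap psi); apply: omap_involution_matching.
Qed.
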